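(* Let $0<\alpha\le2$, $j\ne0$, $V\in C^2(\mathbb{T})$, and $G(x)=p_0+\sum_{k=1}^{n}p_k\cos(2\pi kx)+\sum_{k=1}^nq_k\sin(2\pi kx)$ with $p_k^2+q_k^2>0$ for $1\le k\le n$. If $(m,\overline{H})\in C(\mathbb{T})\times\mathbb{R}$ solves problem (P), then there is $(a_0,\dots,a_n,b_1,\dots,b_n)\in\mathcal{C}$ solving the system (S) such that $$m(x)=\frac{c_j}{\left(a_0+\sum_{k=1}^{n}a_k\cos(2\pi kx)+b_k\sin(2\pi kx)-V(x)\right)^{1/\alpha}},\qquad \overline{H}=a_0-p_0.\tag{$*$}$$ Conversely, if $(a_0,\dots,a_n,b_1,\dots,b_n)\in\mathcal{C}$ solves (S), then $(m,\overline{H})$ defined by $( * )$ solves problem (P).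
   Context: $\mathbb{T}=\mathbb{R}/\mathbb{Z}$. Problem (P): find $(m,\overline{H})\in C(\mathbb{T})\times\mathbb{R}$ with $m>0$, $\int_{\mathbb{T}}m=1$, and $\frac{j^2}{2m(x)^\alpha}+V(x)=\int_{\mathbb{T}}G(x-y)m(y)\,dy+\overline{H}$ for all $x$. Set $c_j=(j^2/2)^{1/\alpha}$; $\phi_\alpha(t)=\frac{c_j\alpha}{\alpha-1}t^{(\alpha-1)/\alpha}$ if $\alpha\ne1$, $\phi_\alpha(t)=c_j\ln t$ if $\alpha=1$ ($t>0$). $\mathcal{C}\subset\mathbb{R}^{2n+1}$ is the set of $(a_0,\dots,a_n,b_1,\dots,b_n)$ with $a_0+\sum_{k=1}^n(a_k\cos(2\pi kx)+b_k\sin(2\pi kx))-V(x)>0$ for all $x\in\mathbb{T}$; on $\mathcal{C}$, $\Phi_\alpha(a_0,\dots,b_n)=\int_{\mathbb{T}}\phi_\alpha\big(a_0+\sum_{k=1}^n(a_k\cos(2\pi ky)+b_k\sin(2\pi ky))-V(y)\big)\,dy$. System (S): $\partial\Phi_\alpha/\partial a_0=1$, $\partial\Phi_\alpha/\partial a_k=\frac{p_ka_k+q_kb_k}{p_k^2+q_k^2}$, $\partial\Phi_\alpha/\partial b_k=\frac{p_kb_k-q_ka_k}{p_k^2+q_k^2}$ for $1\le k\le n$. *)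

From Stdlib Require Import Reals Lra ClassicalEpsilon.
Open Scope R_scope.

(* Functions on T = R/Z are represented as 1-periodic functions R -> R. *)
Definition periodic1 (f : R -> R) : Prop := forall x, f (x + 1) = f x.

(* Integral over T = integral over [0,1] (Riemann); 0 if not integrable
   (never used in that case: all integrands below are continuous). *)
Definition Rint01 (f : R -> R) : R :=
  match excluded_middle_informative (exists pr : Riemann_integrable f 0 1, True) with
  | left H => RiemannInt (proj1_sig (constructive_indefinite_description _ H))
  | right _ => 0
  end.

Fixpoint sum1 (n : nat) (f : nat -> R) : R :=
  match n with
  | O => 0
  | S n' => sum1 n' f + f (S n')
  end.

Definition trig (n : nat) (a b : nat -> R) (x : R) : R :=
  a 0%nat + sum1 n (fun k => a k * cos (2 * PI * INR k * x) + b k * sin (2 * PI * INR k * x)).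

Definition C2_periodic (V : R -> R) : Prop :=
  periodic1 V /\
  exists V' V'' : R -> R,
    (forall x, derivable_pt_lim V x (V' x)) /\
    (forall x, derivable_pt_lim V' x (V'' x)) /\
    continuity V''.

Definition c_j (alpha j : R) : R := Rpower (j ^ 2 / 2) (1 / alpha).

Definition phi (alpha j : R) (t : R) : R :=
  if Req_EM_T alpha 1 then c_j alpha j * ln t
  else c_j alpha j * alpha / (alpha - 1) * Rpower t ((alpha - 1) / alpha).

Definition inC (n : nat) (V : R -> R) (a b : nat -> R) : Prop :=
  forall x, trig n a b x - V x > 0.

Definition Phi (alpha j : R) (n : nat) (V : R -> R) (a b : nat -> R) : R :=
  Rint01 (fun y => phi alpha j (trig n a b y - V y)).

Definition upd (a : nat -> R) (k : nat) (t : R) : nat -> R :=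
  fun i => if Nat.eqb i k then t else a i.

Definition solvesS (alpha j : R) (n : nat) (V : R -> R) (p q : nat -> R)
    (a b : nat -> R) : Prop :=
  derivable_pt_lim (fun t => Phi alpha j n V (upd a 0 t) b) (a 0%nat) 1 /\
  forall k, (1 <= k <= n)%nat ->
    derivable_pt_lim (fun t => Phi alpha j n V (upd a k t) b) (a k)
      ((p k * a k + q k * b k) / (p k ^ 2 + q k ^ 2)) /\
    derivable_pt_lim (fun t => Phi alpha j n V a (upd b k t)) (b k)
      ((p k * b k - q k * a k) / (p k ^ 2 + q k ^ 2)).

Definition solvesP (alpha j : R) (V G m : R -> R) (H : R) : Prop :=
  continuity m /\ periodic1 m /\ (forall x, 0 < m x) /\ Rint01 m = 1 /\
  forall x, j ^ 2 / (2 * Rpower (m x) alpha) + V x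
            = Rint01 (fun y => G (x - y) * m y) + H.

Definition m_of (alpha j : R) (n : nat) (V : R -> R) (a b : nat -> R) (x : R) : R :=
  c_j alpha j / Rpower (trig n a b x - V x) (1 / alpha).

(* The density [m = phi' (trig - V)] of ( * ) is what differentiation under the
   integral sign produces: the partial derivatives of [Phi] in [a_0], [a_k], [b_k]
   are the mass and the Fourier coefficients of [m]. So (S) says that [m] has
   mass 1 and prescribed Fourier coefficients. Convolution with the
   trigonometric polynomial [G] multiplies the [k]-th Fourier coefficient of [m]
   by [p_k + i q_k], hence [G * m] is the trigonometric polynomial whose
   coefficients are exactly those of (S), and (P), written as
   [j^2 / (2 m^alpha) = G * m + H - V], is equivalent to ( * ) after inverting
   [m |-> j^2 / (2 m^alpha)]. *)

From Stdlib Require Import Reals Lra Lia FunctionalExtensionality ClassicalEpsilon.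
From Coquelicot Require Import Coquelicot.
Open Scope R_scope.

Lemma Rint01_RInt (f : R -> R) : ex_RInt f 0 1 -> Rint01 f = RInt f 0 1.
Proof.
  intros Hf. unfold Rint01.
  destruct (excluded_middle_informative _) as [Hyes|Hno].
  - symmetry. apply RInt_Reals.
  - exfalso. apply Hno. exists (ex_RInt_Reals_0 _ _ _ Hf). exact I.
Qed.

Lemma ex_RInt01_continuity (f : R -> R) : continuity f -> ex_RInt f 0 1.
Proof.
  intros Hf. apply (@ex_RInt_continuous R_CompleteNormedModule). intros z _.
  apply continuity_pt_filterlim, Hf.
Qed.

Lemma Rint01_continuity (f : R -> R) : continuity f -> Rint01 f = RInt f 0 1.
Proof. intros Hf. apply Rint01_RInt, ex_RInt01_continuity, Hf. Qed.

Lemma Rint01_const (c : R) : Rint01 (fun _ => c) = c.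
Proof.
  rewrite Rint01_continuity by reg. rewrite RInt_const.
  unfold scal; simpl; unfold mult; simpl. ring.
Qed.

Lemma Rint01_plus (f g : R -> R) : continuity f -> continuity g ->
  Rint01 (fun y => f y + g y) = Rint01 f + Rint01 g.
Proof.
  intros Hf Hg. rewrite !Rint01_continuity by (auto; reg).
  exact (RInt_plus f g 0 1 (ex_RInt01_continuity f Hf) (ex_RInt01_continuity g Hg)).
Qed.

Lemma Rint01_scal (c : R) (f : R -> R) : continuity f ->
  Rint01 (fun y => c * f y) = c * Rint01 f.
Proof.
  intros Hf. rewrite !Rint01_continuity by (auto; reg).
  exact (RInt_scal f 0 1 c (ex_RInt01_continuity f Hf)).
Qed.

Lemma sum1_ext (n : nat) (f g : nat -> R) :
  (forall k, (1 <= k <= n)%nat -> f k = g k) -> sum1 n f = sum1 n g.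
Proof.
  induction n as [|n IH]; intros Hfg; simpl; [reflexivity|].
  rewrite IH by (intros; apply Hfg; lia). rewrite Hfg by lia. reflexivity.
Qed.

Lemma sum1_mult_r (n : nat) (f : nat -> R) (c : R) :
  sum1 n f * c = sum1 n (fun k => f k * c).
Proof. induction n as [|n IH]; simpl; [ring|]. rewrite <- IH. ring. Qed.

Lemma sum1_plus (n : nat) (f g : nat -> R) :
  sum1 n (fun k => f k + g k) = sum1 n f + sum1 n g.
Proof. induction n as [|n IH]; simpl; [ring|]. rewrite IH. ring. Qed.

Lemma sum1_single (n k : nat) (c : R) : (1 <= k <= n)%nat ->
  sum1 n (fun i => if Nat.eqb i k then c else 0) = c.
Proof.
  induction n as [|n IH]; intros Hk; [lia|]. cbn [sum1].
  destruct (Nat.eqb_spec (S n) k) as [<-|Hne].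
  - assert (Hzero : forall m, (m <= n)%nat ->
              sum1 m (fun i => if Nat.eqb i (S n) then c else 0) = 0).
    { induction m as [|m IHm]; intros Hm; cbn [sum1]; [reflexivity|].
      rewrite IHm by lia. destruct (Nat.eqb_spec (S m) (S n)); [lia|ring]. }
    rewrite Hzero by lia. ring.
  - rewrite IH by lia. ring.
Qed.

Lemma continuity_sum1 (n : nat) (h : nat -> R -> R) :
  (forall k, continuity (h k)) -> continuity (fun y => sum1 n (fun k => h k y)).
Proof.
  intros Hh. induction n as [|n IH]; simpl.
  - apply continuity_const. intros u v; reflexivity.
  - apply continuity_plus; auto.
Qed.

Lemma Rint01_sum1 (n : nat) (h : nat -> R -> R) : (forall k, continuity (h k)) ->
  Rint01 (fun y => sum1 n (fun k => h k y)) = sum1 n (fun k => Rint01 (h k)).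
Proof.
  intros Hh. induction n as [|n IH]; simpl.
  - apply Rint01_const.
  - rewrite Rint01_plus by (auto; apply continuity_sum1; auto). rewrite IH. reflexivity.
Qed.

Lemma continuity_trig (n : nat) (a b : nat -> R) : continuity (trig n a b).
Proof.
  unfold trig. apply continuity_plus.
  - apply continuity_const. intros u v; reflexivity.
  - apply (continuity_sum1 n (fun k y => a k * cos (2 * PI * INR k * y)
                                       + b k * sin (2 * PI * INR k * y))).
    intros k. reg.
Qed.

Lemma trig_periodic (n : nat) (a b : nat -> R) : periodic1 (trig n a b).
Proof.
  intros x. unfold trig. f_equal. apply sum1_ext. intros k _.
  replace (2 * PI * INR k * (x + 1)) with (2 * PI * INR k * x + 2 * INR k * PI) by ring.
  rewrite cos_period, sin_period. reflexivity.
Qed.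

Lemma trig_ext (n : nat) (a b a' b' : nat -> R) (x : R) :
  (forall k, (1 <= k <= n)%nat -> a k = a' k /\ b k = b' k) ->
  trig n a b x = trig n a' b' x + (a 0%nat - a' 0%nat).
Proof.
  intros Hab. unfold trig.
  rewrite (sum1_ext n _ (fun k => a' k * cos (2 * PI * INR k * x)
                                 + b' k * sin (2 * PI * INR k * x))).
  - ring.
  - intros k Hk. destruct (Hab k Hk) as [-> ->]. reflexivity.
Qed.

Lemma trig_upd0 (n : nat) (a b : nat -> R) (t x : R) :
  trig n (upd a 0 t) b x = trig n a b x + (t - a 0%nat) * 1.
Proof.
  rewrite (trig_ext n (upd a 0 t) b a b x).
  - unfold upd; simpl. ring.
  - intros [|k] Hk; [lia|]. split; reflexivity.
Qed.

Lemma trig_upd_cos (n : nat) (a b : nat -> R) (k : nat) (t x : R) : (1 <= k <= n)%nat ->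
  trig n (upd a k t) b x = trig n a b x + (t - a k) * cos (2 * PI * INR k * x).
Proof.
  intros Hk. unfold trig.
  rewrite (sum1_ext n _ (fun i => (a i * cos (2 * PI * INR i * x) + b i * sin (2 * PI * INR i * x))
     + (if Nat.eqb i k then (t - a k) * cos (2 * PI * INR k * x) else 0))).
  - rewrite sum1_plus, sum1_single by exact Hk.
    unfold upd. destruct (Nat.eqb_spec 0 k); [lia|]. ring.
  - intros i _. unfold upd. destruct (Nat.eqb_spec i k) as [->|]; ring.
Qed.

Lemma trig_upd_sin (n : nat) (a b : nat -> R) (k : nat) (t x : R) : (1 <= k <= n)%nat ->
  trig n a (upd b k t) x = trig n a b x + (t - b k) * sin (2 * PI * INR k * x).
Proof.
  intros Hk. unfold trig.
  rewrite (sum1_ext n _ (fun i => (a i * cos (2 * PI * INR i * x) + b i * sin (2 * PI * INR i * x))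
     + (if Nat.eqb i k then (t - b k) * sin (2 * PI * INR k * x) else 0))).
  - rewrite sum1_plus, sum1_single by exact Hk. ring.
  - intros i _. unfold upd. destruct (Nat.eqb_spec i k) as [->|]; ring.
Qed.

Definition cos_coef (m : R -> R) (k : nat) : R :=
  Rint01 (fun y => m y * cos (2 * PI * INR k * y)).

Definition sin_coef (m : R -> R) (k : nat) : R :=
  Rint01 (fun y => m y * sin (2 * PI * INR k * y)).

(* Fourier coefficients of [G * m] for the trigonometric polynomial [G = trig n p q]. *)
Definition conv_cos (p q : nat -> R) (m : R -> R) (k : nat) : R :=
  p k * cos_coef m k - q k * sin_coef m k.

Definition conv_sin (p q : nat -> R) (m : R -> R) (k : nat) : R :=
  p k * sin_coef m k + q k * cos_coef m k.

Lemma conv_cos_0 (p q : nat -> R) (m : R -> R) : conv_cos p q m 0 = p 0%nat * Rint01 m.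
Proof.
  unfold conv_cos, cos_coef, sin_coef. simpl INR.
  replace (fun y => m y * cos (2 * PI * 0 * y)) with m
    by (apply functional_extensionality; intros y; rewrite Rmult_0_r, Rmult_0_l, cos_0; ring).
  replace (fun y => m y * sin (2 * PI * 0 * y)) with (fun _ : R => 0)
    by (apply functional_extensionality; intros y; rewrite Rmult_0_r, Rmult_0_l, sin_0; ring).
  rewrite Rint01_const. ring.
Qed.

Lemma trig_convolution (n : nat) (p q : nat -> R) (m : R -> R) (x : R) : continuity m ->
  Rint01 (fun y => trig n p q (x - y) * m y) = trig n (conv_cos p q m) (conv_sin p q m) x.
Proof.
  intros Hm.
  set (A := fun k => p k * cos (2 * PI * INR k * x) + q k * sin (2 * PI * INR k * x)).
  set (B := fun k => p k * sin (2 * PI * INR k * x) - q k * cos (2 * PI * INR k * x)).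
  replace (fun y => trig n p q (x - y) * m y)
    with (fun y => p 0%nat * m y + sum1 n (fun k => A k * (m y * cos (2 * PI * INR k * y))
                                               + B k * (m y * sin (2 * PI * INR k * y)))).
  - rewrite Rint01_plus, Rint01_scal, Rint01_sum1 by (try apply continuity_sum1; intros; reg).
    unfold trig. rewrite conv_cos_0. f_equal.
    apply sum1_ext. intros k _.
    rewrite Rint01_plus, !Rint01_scal by reg.
    unfold conv_cos, conv_sin, cos_coef, sin_coef, A, B. ring.
  - apply functional_extensionality. intros y.
    unfold trig. rewrite Rmult_plus_distr_r, sum1_mult_r. f_equal.
    apply sum1_ext. intros k _. unfold A, B.
    replace (2 * PI * INR k * (x - y)) with (2 * PI * INR k * x - 2 * PI * INR k * y) by ring.
    rewrite cos_minus, sin_minus. ring.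
Qed.

Section DerivativeUnderIntegral.

Variables (f f' : R -> R).
Hypothesis f_derivable : forall s, 0 < s -> derivable_pt_lim f s (f' s).
Hypothesis f'_continuous : forall s, 0 < s -> continuity_pt f' s.

Variables (F g : R -> R) (t0 : R).
Hypotheses (F_continuous : continuity F) (F_pos : forall w, 0 < F w).
Hypotheses (g_continuous : continuity g) (g_bounded : forall w, Rabs (g w) <= 1).

Let shift (u w : R) : R := F w + (u - t0) * g w.

Lemma shift_uniformly_pos :
  exists eps : posreal, forall u, Rabs (u - t0) < eps -> forall w, 0 <= w <= 1 -> 0 < shift u w.
Proof.
  destruct (continuity_ab_min F 0 1) as [wmin [Hmin _]]; [lra | intros; apply F_continuous |].
  assert (Hpos : 0 < F wmin / 2) by (pose proof (F_pos wmin); lra).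
  exists (mkposreal _ Hpos). intros u Hu w Hw. simpl in Hu. unfold shift.
  assert (Hprod : Rabs ((u - t0) * g w) <= Rabs (u - t0)).
  { rewrite Rabs_mult. pose proof (Rabs_pos (u - t0)). pose proof (g_bounded w). nra. }
  specialize (Hmin w Hw).
  pose proof (Rle_abs (- ((u - t0) * g w))). rewrite Rabs_Ropp in *. lra.
Qed.

Lemma is_derive_f_shift (u w : R) : 0 < shift u w ->
  is_derive (fun z => f (shift z w)) u (f' (shift u w) * g w).
Proof.
  intros Hpos. unfold shift in *.
  replace (f' (F w + (u - t0) * g w) * g w)
    with (scal (g w) (f' (F w + (u - t0) * g w)))
    by (unfold scal; simpl; unfold mult; simpl; ring).
  apply (is_derive_comp f (fun z => F w + (z - t0) * g w)).
  - apply is_derive_Reals, f_derivable, Hpos.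
  - auto_derive; [exact I | ring].
Qed.

Lemma continuity_2d_shift (u w : R) : continuity_2d_pt shift u w.
Proof.
  unfold shift. apply continuity_2d_pt_plus.
  - apply (continuity_1d_2d_pt_comp F (fun _ v => v)); [apply F_continuous | apply continuity_2d_pt_id2].
  - apply continuity_2d_pt_mult.
    + apply continuity_2d_pt_minus; [apply continuity_2d_pt_id1 | apply continuity_2d_pt_const].
    + apply (continuity_1d_2d_pt_comp g (fun _ v => v)); [apply g_continuous | apply continuity_2d_pt_id2].
Qed.

Lemma continuity_2d_Derive_f_shift (w : R) :
  continuity_2d_pt (fun u v => Derive (fun z => f (shift z v)) u) t0 w.
Proof.
  assert (Hshift0 : shift t0 w = F w) by (unfold shift; ring).
  apply continuity_2d_pt_ext_loc with (f := fun u v => f' (shift u v) * g v).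
  - assert (Hhalf : 0 < F w / 2) by (pose proof (F_pos w); lra).
    eapply locally_2d_impl; [| exact (continuity_2d_shift t0 w (mkposreal _ Hhalf))].
    apply locally_2d_forall. intros u v Huv. simpl in Huv. rewrite Hshift0 in Huv.
    symmetry. apply is_derive_unique, is_derive_f_shift.
    apply Rabs_def2 in Huv. lra.
  - apply continuity_2d_pt_mult.
    + apply continuity_1d_2d_pt_comp; [| apply continuity_2d_shift].
      apply f'_continuous. rewrite Hshift0. apply F_pos.
    + apply (continuity_1d_2d_pt_comp g (fun _ v => v)); [apply g_continuous | apply continuity_2d_pt_id2].
Qed.

Lemma derivable_pt_lim_Rint01_shift :
  derivable_pt_lim (fun t => Rint01 (fun w => f (F w + (t - t0) * g w))) t0
    (Rint01 (fun w => f' (F w) * g w)).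
Proof.
  destruct shift_uniformly_pos as [eps Heps].
  assert (Hex : forall u, Rabs (u - t0) < eps -> ex_RInt (fun w => f (shift u w)) 0 1).
  { intros u Hu. apply (@ex_RInt_continuous R_CompleteNormedModule).
    rewrite Rmin_left, Rmax_right by lra. intros w Hw.
    apply continuity_pt_filterlim, (continuity_pt_comp (shift u) f).
    - apply continuity_pt_plus; [apply F_continuous | reg].
    - apply derivable_continuous_pt. exists (f' (shift u w)).
      apply f_derivable, Heps; assumption. }
  assert (Hparam : is_derive (fun u => RInt (fun w => f (shift u w)) 0 1) t0
                     (RInt (fun w => Derive (fun z => f (shift z w)) t0) 0 1)).
  { apply is_derive_RInt_param.
    - exists eps. intros u Hu w Hw. rewrite Rmin_left, Rmax_right in Hw by lra.
      eexists. apply is_derive_f_shift, Heps; assumption.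
    - intros w _. apply continuity_2d_Derive_f_shift.
    - exists eps. exact Hex. }
  assert (HDerive : forall w, Derive (fun z => f (shift z w)) t0 = f' (F w) * g w).
  { intros w. assert (Hshift0 : shift t0 w = F w) by (unfold shift; ring).
    rewrite <- Hshift0. apply is_derive_unique, is_derive_f_shift.
    rewrite Hshift0. apply F_pos. }
  apply is_derive_Reals. rewrite Rint01_RInt.
  - rewrite <- (RInt_ext _ _ 0 1 (fun w _ => HDerive w)).
    apply (is_derive_ext_loc (fun u => RInt (fun w => f (shift u w)) 0 1)); [| exact Hparam].
    exists eps. intros u Hu. symmetry. apply Rint01_RInt, Hex, Hu.
  - apply ex_RInt01_continuity. intros w. apply continuity_pt_mult; [| apply g_continuous].
    apply (continuity_pt_comp F f'); [apply F_continuous | apply f'_continuous, F_pos].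
Qed.

End DerivativeUnderIntegral.

Definition dphi (alpha j s : R) : R := c_j alpha j * Rpower s (- (1 / alpha)).

Lemma derivable_pt_lim_phi (alpha j s : R) : 0 < alpha -> 0 < s ->
  derivable_pt_lim (phi alpha j) s (dphi alpha j s).
Proof.
  intros Ha Hs. unfold phi, dphi.
  destruct (Req_EM_T alpha 1) as [->|Hne].
  - replace (Rpower s (- (1 / 1))) with (/ s)
      by (rewrite Rdiv_1_r, Rpower_Ropp, Rpower_1 by lra; reflexivity).
    apply derivable_pt_lim_scal, derivable_pt_lim_ln, Hs.
  - replace (c_j alpha j * Rpower s (- (1 / alpha)))
      with (c_j alpha j * alpha / (alpha - 1)
            * ((alpha - 1) / alpha * Rpower s ((alpha - 1) / alpha - 1))).
    + apply derivable_pt_lim_scal, derivable_pt_lim_power, Hs.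
    + replace ((alpha - 1) / alpha - 1) with (- (1 / alpha)) by (field; lra).
      field. split; lra.
Qed.

Lemma continuity_pt_dphi (alpha j s : R) : 0 < s -> continuity_pt (dphi alpha j) s.
Proof.
  intros Hs. unfold dphi. apply continuity_pt_mult.
  - apply continuity_pt_const. intros u v; reflexivity.
  - apply derivable_continuous_pt. eexists. apply derivable_pt_lim_power, Hs.
Qed.

Lemma m_of_dphi (alpha j : R) (n : nat) (V : R -> R) (a b : nat -> R) (x : R) :
  m_of alpha j n V a b x = dphi alpha j (trig n a b x - V x).
Proof. unfold m_of, dphi. rewrite Rpower_Ropp. reflexivity. Qed.

Lemma continuity_m_of (alpha j : R) (n : nat) (V : R -> R) (a b : nat -> R) :
  continuity V -> inC n V a b -> continuity (m_of alpha j n V a b).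
Proof.
  intros HV HC x. rewrite (functional_extensionality _ _ (m_of_dphi alpha j n V a b)).
  apply (continuity_pt_comp (fun w => trig n a b w - V w) (dphi alpha j)).
  - apply continuity_pt_minus; [apply continuity_trig | apply HV].
  - apply continuity_pt_dphi, HC.
Qed.

Lemma m_of_pos (alpha j : R) (n : nat) (V : R -> R) (a b : nat -> R) (x : R) :
  0 < m_of alpha j n V a b x.
Proof. unfold m_of, c_j, Rpower. apply Rdiv_lt_0_compat; apply exp_pos. Qed.

Lemma m_of_periodic (alpha j : R) (n : nat) (V : R -> R) (a b : nat -> R) :
  periodic1 V -> periodic1 (m_of alpha j n V a b).
Proof. intros HV x. unfold m_of. rewrite trig_periodic, HV. reflexivity. Qed.

Lemma Rpower_div (u v y : R) : 0 < u -> 0 < v -> Rpower (u / v) y = Rpower u y / Rpower v y.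
Proof.
  intros Hu Hv. unfold Rpower, Rdiv.
  rewrite ln_mult, ln_Rinv by (try apply Rinv_0_lt_compat; assumption).
  replace (y * (ln u + - ln v)) with (y * ln u + - (y * ln v)) by ring.
  rewrite exp_plus, exp_Ropp. reflexivity.
Qed.

Lemma Rpower_Rpower_inv (u alpha : R) : 0 < u -> alpha <> 0 ->
  Rpower (Rpower u alpha) (1 / alpha) = u /\ Rpower (Rpower u (1 / alpha)) alpha = u.
Proof.
  intros Hu Ha. rewrite !Rpower_mult.
  replace (alpha * (1 / alpha)) with 1 by (field; lra).
  replace (1 / alpha * alpha) with 1 by (field; lra).
  rewrite Rpower_1 by exact Hu. split; reflexivity.
Qed.

Lemma half_sqr_pos (j : R) : j <> 0 -> 0 < j ^ 2 / 2.
Proof. intros Hj. pose proof (Rsqr_pos_lt j Hj). unfold Rsqr in *. nra. Qed.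

Lemma kinetic_m_of (alpha j : R) (n : nat) (V : R -> R) (a b : nat -> R) (x : R) :
  0 < alpha -> j <> 0 -> inC n V a b ->
  j ^ 2 / (2 * Rpower (m_of alpha j n V a b x) alpha) = trig n a b x - V x.
Proof.
  intros Ha Hj HC. specialize (HC x).
  unfold m_of, c_j. pose proof (half_sqr_pos j Hj).
  rewrite Rpower_div by (unfold Rpower; apply exp_pos).
  rewrite (proj2 (Rpower_Rpower_inv (j ^ 2 / 2) alpha ltac:(lra) ltac:(lra))).
  rewrite (proj2 (Rpower_Rpower_inv (trig n a b x - V x) alpha ltac:(lra) ltac:(lra))).
  field. lra.
Qed.

Lemma c_j_div_kinetic (alpha j mx : R) : 0 < alpha -> j <> 0 -> 0 < mx ->
  c_j alpha j / Rpower (j ^ 2 / (2 * Rpower mx alpha)) (1 / alpha) = mx.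
Proof.
  intros Ha Hj Hm. unfold c_j. pose proof (half_sqr_pos j Hj).
  assert (Hpow : 0 < Rpower mx alpha) by (unfold Rpower; apply exp_pos).
  replace (j ^ 2 / (2 * Rpower mx alpha)) with ((j ^ 2 / 2) / Rpower mx alpha) by (field; lra).
  rewrite (Rpower_div (j ^ 2 / 2)) by assumption.
  rewrite (proj1 (Rpower_Rpower_inv mx alpha Hm ltac:(lra))).
  assert (0 < Rpower (j ^ 2 / 2) (1 / alpha)) by (unfold Rpower; apply exp_pos).
  field. lra.
Qed.

Section PartialDerivatives.

Variables (alpha j : R) (n : nat) (V : R -> R) (a b : nat -> R).
Hypotheses (alpha_pos : 0 < alpha) (V_continuous : continuity V) (ab_in_C : inC n V a b).

Lemma derivable_pt_lim_Phi_shift (A B : R -> nat -> R) (g : R -> R) (t0 : R) :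
  continuity g -> (forall w, Rabs (g w) <= 1) ->
  (forall t w, trig n (A t) (B t) w = trig n a b w + (t - t0) * g w) ->
  derivable_pt_lim (fun t => Phi alpha j n V (A t) (B t)) t0
    (Rint01 (fun w => m_of alpha j n V a b w * g w)).
Proof.
  intros Hg Hg1 HAB.
  replace (fun t => Phi alpha j n V (A t) (B t))
    with (fun t => Rint01 (fun w => phi alpha j ((trig n a b w - V w) + (t - t0) * g w))).
  - rewrite (functional_extensionality _ _ (m_of_dphi alpha j n V a b)).
    apply (derivable_pt_lim_Rint01_shift (phi alpha j) (dphi alpha j)).
    + intros s Hs. apply derivable_pt_lim_phi; assumption.
    + apply continuity_pt_dphi.
    + intros x. apply continuity_minus; [apply continuity_trig | exact V_continuous].
    + intros w. apply ab_in_C.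
    + exact Hg.
    + exact Hg1.
  - apply functional_extensionality. intros t. unfold Phi. f_equal.
    apply functional_extensionality. intros w. rewrite HAB. f_equal. ring.
Qed.

Lemma derivable_pt_lim_Phi_a0 :
  derivable_pt_lim (fun t => Phi alpha j n V (upd a 0 t) b) (a 0%nat)
    (Rint01 (m_of alpha j n V a b)).
Proof.
  replace (Rint01 (m_of alpha j n V a b))
    with (Rint01 (fun w => m_of alpha j n V a b w * 1))
    by (f_equal; apply functional_extensionality; intros; ring).
  apply derivable_pt_lim_Phi_shift.
  - reg.
  - intros _. rewrite Rabs_R1. lra.
  - intros t w. apply trig_upd0.
Qed.

Lemma derivable_pt_lim_Phi_cos (k : nat) : (1 <= k <= n)%nat ->
  derivable_pt_lim (fun t => Phi alpha j n V (upd a k t) b) (a k)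
    (cos_coef (m_of alpha j n V a b) k).
Proof.
  intros Hk. apply derivable_pt_lim_Phi_shift.
  - reg.
  - intros w. apply Rabs_le, COS_bound.
  - intros t w. apply trig_upd_cos, Hk.
Qed.

Lemma derivable_pt_lim_Phi_sin (k : nat) : (1 <= k <= n)%nat ->
  derivable_pt_lim (fun t => Phi alpha j n V a (upd b k t)) (b k)
    (sin_coef (m_of alpha j n V a b) k).
Proof.
  intros Hk. apply derivable_pt_lim_Phi_shift.
  - reg.
  - intros w. apply Rabs_le, SIN_bound.
  - intros t w. apply trig_upd_sin, Hk.
Qed.

Lemma solvesS_iff (p q : nat -> R) :
  solvesS alpha j n V p q a b <->
  Rint01 (m_of alpha j n V a b) = 1 /\
  forall k, (1 <= k <= n)%nat ->
    cos_coef (m_of alpha j n V a b) k = (p k * a k + q k * b k) / (p k ^ 2 + q k ^ 2) /\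
    sin_coef (m_of alpha j n V a b) k = (p k * b k - q k * a k) / (p k ^ 2 + q k ^ 2).
Proof.
  split; intros [Hmass Hcoef].
  - split; [exact (uniqueness_limite _ _ _ _ derivable_pt_lim_Phi_a0 Hmass) |].
    intros k Hk. destruct (Hcoef k Hk) as [Hc Hs]. split.
    + exact (uniqueness_limite _ _ _ _ (derivable_pt_lim_Phi_cos k Hk) Hc).
    + exact (uniqueness_limite _ _ _ _ (derivable_pt_lim_Phi_sin k Hk) Hs).
  - split; [rewrite <- Hmass; exact derivable_pt_lim_Phi_a0 |].
    intros k Hk. destruct (Hcoef k Hk) as [Hc Hs].
    rewrite <- Hc, <- Hs.
    split; [apply derivable_pt_lim_Phi_cos | apply derivable_pt_lim_Phi_sin]; exact Hk.
Qed.

End PartialDerivatives.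

(* [a + i b = (p + i q) (C + i S)], solved for [C + i S]. *)
Lemma conv_coef_iff (p q a b C S : R) : p ^ 2 + q ^ 2 > 0 ->
  (C = (p * a + q * b) / (p ^ 2 + q ^ 2) /\ S = (p * b - q * a) / (p ^ 2 + q ^ 2)) <->
  (a = p * C - q * S /\ b = p * S + q * C).
Proof.
  intros Hpq. split; intros [-> ->]; split; field; lra.
Qed.

Section Equivalence.

Variables (alpha j : R) (n : nat) (V : R -> R) (p q : nat -> R).
Hypotheses (alpha_pos : 0 < alpha) (j_neq0 : j <> 0) (V_continuous : continuity V).
Hypothesis pq_pos : forall k, (1 <= k <= n)%nat -> p k ^ 2 + q k ^ 2 > 0.

Lemma solvesP_solvesS (m : R -> R) (H : R) :
  solvesP alpha j V (trig n p q) m H ->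
  let a := upd (conv_cos p q m) 0 (p 0%nat + H) in
  let b := conv_sin p q m in
  inC n V a b /\ solvesS alpha j n V p q a b /\
  (forall x, m x = m_of alpha j n V a b x) /\ H = a 0%nat - p 0%nat.
Proof.
  intros [Hmc [_ [Hmpos [Hmass Heq]]]] a b.
  assert (Hkin : forall x, trig n a b x - V x = j ^ 2 / (2 * Rpower (m x) alpha)).
  { intros x. unfold a, b. rewrite trig_upd0, <- trig_convolution, conv_cos_0, Hmass by exact Hmc.
    specialize (Heq x). lra. }
  assert (HC : inC n V a b).
  { intros x. rewrite Hkin. apply Rlt_gt, Rdiv_lt_0_compat.
    - pose proof (half_sqr_pos j j_neq0). lra.
    - pose proof (exp_pos (alpha * ln (m x))). unfold Rpower. lra. }
  assert (Hm : forall x, m x = m_of alpha j n V a b x).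
  { intros x. unfold m_of. rewrite Hkin. symmetry. apply c_j_div_kinetic; auto. }
  split; [exact HC |]. split; [| split; [exact Hm | unfold a, upd; simpl; ring]].
  apply solvesS_iff; auto. rewrite <- (functional_extensionality _ _ Hm).
  split; [exact Hmass |]. intros k Hk.
  apply conv_coef_iff; [apply pq_pos, Hk |].
  unfold a, upd. destruct k; [lia | split; reflexivity].
Qed.

Lemma solvesS_solvesP (a b : nat -> R) : periodic1 V ->
  inC n V a b -> solvesS alpha j n V p q a b ->
  solvesP alpha j V (trig n p q) (m_of alpha j n V a b) (a 0%nat - p 0%nat).
Proof.
  intros Vper HC HS. apply solvesS_iff in HS as [Hmass Hcoef]; auto.
  split; [apply continuity_m_of; auto |].
  split; [apply m_of_periodic; exact Vper |].
  split; [apply m_of_pos |].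
  split; [exact Hmass |].
  intros x. rewrite kinetic_m_of, trig_convolution by auto using continuity_m_of.
  rewrite (trig_ext n a b (conv_cos p q (m_of alpha j n V a b)) (conv_sin p q (m_of alpha j n V a b)) x),
    conv_cos_0, Hmass; [ring |].
  intros k Hk. apply conv_coef_iff; [apply pq_pos, Hk | apply Hcoef, Hk].
Qed.

End Equivalence.

Theorem proposition4p1 (alpha j : R) (n : nat) (V : R -> R) (p q : nat -> R) :
  0 < alpha <= 2 -> j <> 0 -> C2_periodic V ->
  (forall k, (1 <= k <= n)%nat -> p k ^ 2 + q k ^ 2 > 0) ->
  (forall (m : R -> R) (H : R),
      solvesP alpha j V (trig n p q) m H ->
      exists a b : nat -> R,
        inC n V a b /\ solvesS alpha j n V p q a b /\
        (forall x, m x = m_of alpha j n V a b x) /\ H = a 0%nat - p 0%nat) /\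
  (forall a b : nat -> R,
      inC n V a b -> solvesS alpha j n V p q a b ->
      solvesP alpha j V (trig n p q) (m_of alpha j n V a b) (a 0%nat - p 0%nat)).
Proof.
  intros [Ha _] Hj [Vper [V' [_ [HV' _]]]] Hpq.
  assert (HV : continuity V).
  { intros x. apply derivable_continuous_pt. exists (V' x). apply HV'. }
  split.
  - intros m H HP. do 2 eexists. exact (solvesP_solvesS alpha j n V p q Ha Hj HV Hpq m H HP).
  - intros a b. apply solvesS_solvesP; assumption.
Qed.
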